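(* Let $\langle\mathcal{X},\mathsf{cap},\mathsf{rf}\rangle$ be a $\textsf{VCh-rf}$ instance with $\mathcal{X}=\langle\mathsf{S},\mathsf{po}\rangle$ in which every channel is synchronous, and suppose every send event of $\mathsf{S}$ is related by $\mathsf{rf}$ to exactly one receive event, every receive event of $\mathsf{S}$ is related by $\mathsf{rf}$ to exactly one send event, and for every $(s,r)\in\mathsf{rf}$ the events $s$ and $r$ belong to different threads. Then $\langle\mathcal{X},\mathsf{cap},\mathsf{rf}\rangle$ is consistent if and only if its send-receive graph $G_{\mathsf{sync}}$ is acyclic.
   Context: Channels and events. Each channel $\mathtt{ch}$ has a capacity $\mathsf{cap}(\mathtt{ch})\in\mathbb{N}$; $\mathtt{ch}$ is synchronous if $\mathsf{cap}(\mathtt{ch})=0$ and asynchronous otherwise. An event is a tuple $e=\langle id,\tau,\mathsf{op}(\mathtt{ch},\mathsf{val})\rangle$ with a unique identifier $id$, a thread $\tau$, an operation $\mathsf{op}\in\{\mathtt{snd},\mathtt{rcv}\}$, a channel $\mathtt{ch}$ and a value $\mathsf{val}$. An execution is a finite sequence $\sigma$ of distinct events. $\sigma$ is well-formed (w.r.t. $\mathsf{cap}$) if: (i) for every asynchronous $\mathtt{ch}$ and every prefix $\pi$ of $\sigma$, $R_\pi(\mathtt{ch})\le S_\pi(\mathtt{ch})\le R_\pi(\mathtt{ch})+\mathsf{cap}(\mathtt{ch})$, where $S_\pi(\mathtt{ch})$, $R_\pi(\mathtt{ch})$ are the numbers of send, resp. receive, events on $\mathtt{ch}$ in $\pi$;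 (ii) for every synchronous $\mathtt{ch}$, every send on $\mathtt{ch}$ is immediately followed in $\sigma$ by a receive on $\mathtt{ch}$ of a different thread, and every receive on $\mathtt{ch}$ is immediately preceded in $\sigma$ by a send on $\mathtt{ch}$ of a different thread; (iii) for every channel $\mathtt{ch}$ and every $i$, if $\sigma$ contains an $i$-th receive on $\mathtt{ch}$, then the $i$-th send on $\mathtt{ch}$ has the same value as it. The program order $\mathsf{po}_\sigma$ is the set of pairs $(e,f)$ with $e$ before $f$ in $\sigma$ and in the same thread; the reads-from relation $\mathsf{rf}_\sigma$ is the set of pairs $(s,r)$ such that for some channel $\mathtt{ch}$ and some $i$, $s$ is the $i$-th send and $r$ the $i$-th receive on $\mathtt{ch}$ in $\sigma$. An abstract execution is $\mathcal{X}=\langle \mathsf{S},\mathsf{po}\rangle$ where $\mathsf{S}$ is a finite set of events and $\mathsf{po}$ is a strict order that totally orders the events of each thread and relates no events of different threads. An instance of $\textsf{VCh-rf}$ is $\langle\mathcal{X},\mathsf{cap},\mathsf{rf}\rangle$ where $\mathsf{cap}$ is a capacity function on the channels occurring in $\mathsf{S}$ and $\mathsf{rf}$ is a set of pairs $(s,r)$ of a send and a receive event of $\mathsf{S}$ on the same channel; it is consistent if there is an execution $\sigma$ whose set of events is $\mathsf{S}$, with $\mathsf{po}_\sigma=\mathsf{po}$, $\sigma$ well-formed, and $\mathsf{rf}_\sigma=\mathsf{rf}$. In this problem values are irrelevant (equivalently, matched events are assumed to carry equal values). Send-receive graph. $G_{\mathsf{sync}}=(V,E)$ is the directed graph with $V=\mathsf{rf}$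 (the set of matched pairs $\langle s,r\rangle$) and an edge from $\langle s_1,r_1\rangle$ to $\langle s_2,r_2\rangle$ iff some $e_1\in\{s_1,r_1\}$ is the immediate $\mathsf{po}$-predecessor of some $e_2\in\{s_2,r_2\}$. *)

From mathcomp Require Import all_boot.
Set Implicit Arguments. Unset Strict Implicit. Unset Printing Implicit Defensive.

(* Events are the elements of a finite type T (identifiers = the elements
   themselves, hence distinct).
   Values are irrelevant. *)

Section Defs.
Variables (T : finType) (Th C : eqType).
Variables (thr : T -> Th) (isSnd : T -> bool) (ch : T -> C).

(* X = <S, po> with S = all of T is an abstract execution *)
Definition abstract_execution (po : rel T) : Prop :=
  [/\ (forall e, ~~ po e e),
      (forall e f g, po e f -> po f g -> po e g),
      (forall e f, thr e = thr f -> e != f -> po e f || po f e)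
    & (forall e f, po e f -> thr e = thr f)].

Definition rf_wt (rf : rel T) : Prop :=
  forall s r, rf s r -> [/\ isSnd s, ~~ isSnd r & ch s = ch r].

Definition nS (c : C) (p : seq T) := count (fun x => isSnd x && (ch x == c)) p.
Definition nR (c : C) (p : seq T) := count (fun x => ~~ isSnd x && (ch x == c)) p.

Definition po_of (sigma : seq T) : rel T := fun e f =>
  [&& e \in sigma, f \in sigma, index e sigma < index f sigma & thr e == thr f].

Definition rank (sigma : seq T) (e : T) : nat :=
  count (fun x => (isSnd x == isSnd e) && (ch x == ch e)) (take (index e sigma) sigma).

Definition rf_of (sigma : seq T) : rel T := fun s r =>
  [&& s \in sigma, r \in sigma, isSnd s, ~~ isSnd r, ch s == ch r
    & rank sigma s == rank sigma r].

(* well-formedness (conditions (i),(ii); (iii) is vacuous since values are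
   irrelevant) *)
Definition well_formed (cap : C -> nat) (sigma : seq T) : Prop :=
  (forall c, 0 < cap c -> forall n,
      nR c (take n sigma) <= nS c (take n sigma) <= nR c (take n sigma) + cap c)
  /\ (forall x, x \in sigma -> cap (ch x) = 0 ->
      if isSnd x then
        exists y, [/\ y \in sigma, index y sigma = (index x sigma).+1,
                      ~~ isSnd y, ch y = ch x & thr y != thr x]
      else
        exists y, [/\ y \in sigma, (index y sigma).+1 = index x sigma,
                      isSnd y, ch y = ch x & thr y != thr x]).

Definition consistent (po : rel T) (cap : C -> nat) (rf : rel T) : Prop :=
  exists sigma : seq T,
    [/\ uniq sigma, (forall e, e \in sigma),
        (forall e f, po_of sigma e f = po e f),
        well_formed cap sigma
      & (forall s r, rf_of sigma s r = rf s r)].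

Definition ipo (po : rel T) (e f : T) : bool :=
  po e f && [forall g, ~~ (po e g && po g f)].

Definition gsync_edge (po rf : rel T) (a b : T * T) : bool :=
  [&& rf a.1 a.2, rf b.1 b.2 &
      [exists e1 : T, exists e2 : T,
         [&& (e1 == a.1) || (e1 == a.2), (e2 == b.1) || (e2 == b.2) & ipo po e1 e2]]].

Definition gsync_acyclic (po rf : rel T) : Prop :=
  forall (v : T * T) (p : seq (T * T)),
    path (gsync_edge po rf) v p -> last v p = v -> p = [::].

End Defs.

From mathcomp Require Import all_boot zify.
Set Implicit Arguments. Unset Strict Implicit. Unset Printing Implicit Defensive.

(* With only synchronous channels, every send of a well-formed execution is
   immediately followed by a receive on its channel, so the execution
   alternates send, receive, send, ...; counting sends and receives on a channel
   shows that the i-th send and the i-th receive sit at positions 2k and 2k+1.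
   Hence each rf pair is a block of two adjacent events, and since the two
   events of a block lie in different threads, the po-ordered endpoints of a
   G_sync edge force its source block to precede its target block: G_sync is
   acyclic.
   Conversely, po is the transitive closure of immediate po-steps, each of which
   is a G_sync edge, so [po e f] makes the pair of f reachable from the (distinct)
   pair of e.  Number the pairs along an injective linear extension m of
   reachability in the acyclic G_sync, give a send the slot 2m and a receive the
   slot 2m+1, and list the events by slot: the result respects po, is well formed
   and has rf as its reads-from relation. *)


Lemma count_take_leq (T : Type) (p : pred T) (s : seq T) m n :
  m <= n -> count p (take m s) <= count p (take n s).
Proof. by move=> le_mn; rewrite -(subnKC le_mn) takeD count_cat leq_addr. Qed.

Lemma count_take_S (T : Type) (x0 : T) (p : pred T) (s : seq T) n :
  n < size s -> count p (take n.+1 s) = count p (take n s) + p (nth x0 s n).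
Proof. by move=> lt_n; rewrite (take_nth x0 lt_n) -cats1 count_cat /= addn0. Qed.

Lemma count_take_lt (T : Type) (x0 : T) (p : pred T) (s : seq T) i n :
  i < n -> n <= size s -> p (nth x0 s i) ->
  count p (take i s) < count p (take n s).
Proof.
move=> lt_in le_ns p_i.
have := count_take_S x0 p (leq_trans lt_in le_ns); rewrite p_i addn1 => <-.
exact: count_take_leq.
Qed.

Lemma acyclic_of_measure (T : Type) (E : rel T) (f : T -> nat) :
  {homo f : a b / E a b >-> a < b} ->
  forall v p, path E v p -> last v p = v -> p = [::].
Proof.
move=> f_lt v [//|w p] /(homo_path f_lt) /(order_path_min ltn_trans) /allP f_v_lt.
by move=> /= last_v; have := f_v_lt _ (mem_last (f w) (map f p)); rewrite last_map last_v ltnn.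
Qed.

Section SyncLayout.

Variables (T : finType) (C : eqType) (isSnd : T -> bool) (ch : T -> C).
Variable sigma : seq T.
Hypothesis sigma_uniq : uniq sigma.
Hypothesis snd_next : forall x, x \in sigma -> isSnd x ->
  exists2 y, y \in sigma & [/\ index y sigma = (index x sigma).+1, ~~ isSnd y & ch y = ch x].
Hypothesis rcv_prev : forall x, x \in sigma -> ~~ isSnd x ->
  exists2 y, y \in sigma & (index y sigma).+1 = index x sigma /\ isSnd y.

Lemma isSnd_nth x0 i : i < size sigma -> isSnd (nth x0 sigma i) = ~~ odd i.
Proof.
elim: i => [|i IH] lt_i.
  apply/negPn/negP => /(rcv_prev (mem_nth x0 lt_i)) [y _ []].
  by rewrite index_uniq.
have lt_i' := ltnW lt_i; have /= := IH lt_i'; rewrite negbK.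
case: (odd i) => snd_i.
  apply/negPn/negP => /(rcv_prev (mem_nth x0 lt_i)) [y y_in []].
  rewrite index_uniq // => -[idx_y].
  by rewrite -(nth_index x0 y_in) idx_y snd_i.
have [y y_in []] := snd_next (mem_nth x0 lt_i') snd_i.
rewrite index_uniq // => idx_y rcv_y _.
by apply/negbTE; rewrite -idx_y nth_index.
Qed.

Lemma odd_index x : x \in sigma -> odd (index x sigma) = ~~ isSnd x.
Proof. by move=> x_in; rewrite -[odd _]negbK -(isSnd_nth x) ?nth_index ?index_mem. Qed.

Lemma index_snd_double x : x \in sigma -> isSnd x -> exists k, index x sigma = k.*2.
Proof.
move=> x_in snd_x; exists (index x sigma)./2.
by rewrite -{1}(odd_double_half (index x sigma)) odd_index ?snd_x.
Qed.

Lemma nS_nR_take_double c n : n.*2 <= size sigma ->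
  nS isSnd ch c (take n.*2 sigma) = nR isSnd ch c (take n.*2 sigma).
Proof.
elim: n => [|n IH] le_n; first by rewrite take0.
have lt_2n1 : n.*2.+1 < size sigma by rewrite doubleS in le_n.
have lt_2n := ltnW lt_2n1.
have x0 : T by case: sigma lt_2n => [|x].
have snd_2n : isSnd (nth x0 sigma n.*2) by rewrite isSnd_nth // odd_double.
have [y y_in [idx_y rcv_y ch_y]] := snd_next (mem_nth x0 lt_2n) snd_2n.
have def_y : nth x0 sigma n.*2.+1 = y.
  by rewrite -(nth_index x0 y_in) idx_y index_uniq.
rewrite doubleS /nS /nR !(count_take_S x0 _ lt_2n1, count_take_S x0 _ lt_2n).
move: IH; rewrite /nS /nR => -> //; last exact: ltnW.
by rewrite def_y ch_y snd_2n (negbTE rcv_y) !addn0.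
Qed.

Lemma rank_snd s : isSnd s ->
  rank isSnd ch sigma s = nS isSnd ch (ch s) (take (index s sigma) sigma).
Proof. by move=> snd_s; apply: eq_count => x; rewrite snd_s eqb_id. Qed.

Lemma rank_rcv r : ~~ isSnd r ->
  rank isSnd ch sigma r = nR isSnd ch (ch r) (take (index r sigma) sigma).
Proof. by move=> rcv_r; apply: eq_count => x; rewrite (negbTE rcv_r) eqbF_neg. Qed.

Lemma rf_of_sync s r : rf_of isSnd ch sigma s r =
  [&& s \in sigma, r \in sigma, isSnd s & index r sigma == (index s sigma).+1].
Proof.
apply/idP/idP.
  case/and5P=> s_in r_in snd_s rcv_r /andP [/eqP ch_sr /eqP rank_sr].
  rewrite s_in r_in snd_s /=.
  have [k idx_s] := index_snd_double s_in snd_s.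
  have [j idx_r] : exists j, index r sigma = j.*2.+1.
    by exists (index r sigma)./2; rewrite -{1}(odd_double_half (index r sigma)) odd_index ?rcv_r.
  have le_k : k.*2 <= size sigma by rewrite -idx_s index_size.
  have le_j : j.*2.+1 <= size sigma by rewrite -idx_r index_size.
  move: rank_sr; rewrite rank_snd // rank_rcv // -ch_sr idx_s idx_r nS_nR_take_double //.
  case: (ltngtP k j) => [lt_kj | lt_jk | -> //] rank_sr.
  - have : nS isSnd ch (ch s) (take k.*2 sigma) < nS isSnd ch (ch s) (take j.*2 sigma).
      rewrite /nS; apply: (count_take_lt (x0 := s) _ (ltnW le_j)); first by rewrite ltn_double.
      by rewrite -idx_s nth_index // snd_s eqxx.
    rewrite nS_nR_take_double // nS_nR_take_double ?(ltnW le_j) // rank_sr => lt_jj.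
    by have := leq_trans lt_jj (count_take_leq _ _ (leqnSn _)); rewrite ltnn.
  - have : nR isSnd ch (ch s) (take j.*2.+1 sigma) < nR isSnd ch (ch s) (take k.*2 sigma).
      rewrite /nR; apply: (count_take_lt (x0 := r)) => //; first by rewrite -doubleS leq_double.
      by rewrite -idx_r nth_index // rcv_r ch_sr eqxx.
    by rewrite rank_sr ltnn.
case/and4P=> s_in r_in snd_s /eqP idx_r.
have [y y_in [idx_y rcv_y ch_y]] := snd_next s_in snd_s.
have def_y : y = r by apply: (index_inj s y_in r_in); rewrite idx_y idx_r.
subst y; rewrite /rf_of s_in r_in snd_s rcv_y ch_y eqxx /=.
have [k idx_s] := index_snd_double s_in snd_s.
have lt_k : k.*2 < size sigma by rewrite -idx_s index_mem.
rewrite rank_snd // rank_rcv // idx_r idx_s nS_nR_take_double ?(ltnW lt_k) //.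
by rewrite /nR (count_take_S s) // -idx_s nth_index // snd_s addn0 ch_y.
Qed.

End SyncLayout.

Lemma gsync_edge_index_lt (T : finType) (Th : eqType) (thr : T -> Th)
    (po rf : rel T) (sigma : seq T) :
  (forall e, e \in sigma) ->
  (forall e f, po e f -> index e sigma < index f sigma) ->
  (forall e f, po e f -> thr e = thr f) ->
  (forall s r, rf s r -> index r sigma = (index s sigma).+1) ->
  (forall s r, rf s r -> thr s <> thr r) ->
  forall a b, gsync_edge po rf a b -> index a.1 sigma < index b.1 sigma.
Proof.
move=> mem_sigma po_index po_thr rf_index rf_thr [s1 r1] [s2 r2] /=.
case/and3P=> /= rf1 rf2 /existsP [e1 /existsP [e2 /and3P [in1 in2 /andP [po12 _]]]].
have lt12 := po_index _ _ po12.
have pair_index s r e : rf s r -> (e == s) || (e == r) ->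
    index s sigma <= index e sigma <= (index s sigma).+1.
  by move=> /rf_index idx /orP [] /eqP ->; rewrite ?idx leqnn leqnSn.
have := pair_index _ _ _ rf1 in1; have := pair_index _ _ _ rf2 in2.
case: (ltngtP (index s1 sigma) (index s2 sigma)) => // [lt21 | eq12]; first lia.
have def_s2 : s2 = s1 by apply: (index_inj s1).
have def_r2 : r2 = r1.
  by apply: (index_inj s1); rewrite // (rf_index _ _ rf1) (rf_index _ _ rf2) eq12.
subst s2 r2 => _ _; have := rf_thr _ _ rf1; have := po_thr _ _ po12.
move: lt12 (rf_index _ _ rf1).
by case/orP: in1 => /eqP->; case/orP: in2 => /eqP-> => //; lia.
Qed.

Lemma consistent_gsync_acyclic (T : finType) (Th C : eqType)
    (thr : T -> Th) (isSnd : T -> bool) (ch : T -> C)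
    (po : rel T) (cap : C -> nat) (rf : rel T) :
  abstract_execution thr po ->
  (forall e, cap (ch e) = 0) ->
  (forall s r, rf s r -> thr s <> thr r) ->
  consistent thr isSnd ch po cap rf -> gsync_acyclic po rf.
Proof.
move=> [_ _ _ po_thr] cap0 rf_thr [sigma [uniq_sigma mem_sigma po_sigma [_ sync] rf_sigma]].
have snd_next x : x \in sigma -> isSnd x -> exists2 y, y \in sigma &
    [/\ index y sigma = (index x sigma).+1, ~~ isSnd y & ch y = ch x].
  move=> x_in snd_x; move: (sync x x_in (cap0 x)); rewrite snd_x.
  by case=> y [y_in ? ? ? _]; exists y.
have rcv_prev x : x \in sigma -> ~~ isSnd x -> exists2 y, y \in sigma &
    (index y sigma).+1 = index x sigma /\ isSnd y.
  move=> x_in /negbTE rcv_x; move: (sync x x_in (cap0 x)); rewrite rcv_x.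
  by case=> y [y_in ? ? _ _]; exists y.
have rf_index s r : rf s r -> index r sigma = (index s sigma).+1.
  by rewrite -rf_sigma rf_of_sync // => /and4P [_ _ _ /eqP].
have po_index e f : po e f -> index e sigma < index f sigma.
  by rewrite -po_sigma => /and4P [].
apply: (acyclic_of_measure (f := fun a => index a.1 sigma)).
exact: gsync_edge_index_lt po_index po_thr rf_index rf_thr.
Qed.

Lemma connect_ipo (T : finType) (po : rel T) :
  irreflexive po -> transitive po -> subrel po (connect (ipo po)).
Proof.
move=> po_irr po_tr e f; have [n] := ubnP #|[pred g | po e g && po g f]|.
elim: n e f => // n IH e f lt_n po_ef.
have [no_mid | /forallPn [g /negPn /andP [po_eg po_gf]]] :=
  boolP [forall g, ~~ (po e g && po g f)].
  by apply: connect1; rewrite /ipo po_ef.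
have lt_card x y :
    {subset [pred h | po x h && po h y] <= [pred h | po e h && po h f]} ->
    ~~ (po x g && po g y) -> #|[pred h | po x h && po h y]| < n.
  move=> sub_xy g_notin; rewrite -ltnS; apply: leq_trans lt_n.
  apply/proper_card/properP.
  by split; [apply/subsetP | exists g; rewrite ?inE ?po_eg].
apply: (connect_trans (IH e g _ po_eg) (IH g f _ po_gf)); apply: lt_card;
  rewrite ?po_irr ?andbF //= => h /andP [po_1 po_2]; apply/andP; split => //.
- exact: po_tr po_2 po_gf.
- exact: po_tr po_eg po_1.
Qed.

Lemma connect_homo (T U : finType) (e : rel T) (e' : rel U) (f : T -> U) :
  {homo f : x y / e x y >-> e' x y} -> {homo f : x y / connect e x y >-> connect e' x y}.
Proof.
move=> f_homo x y /connectP [p p_path ->]; apply/connectP.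
by exists (map f p); [exact: homo_path p_path | rewrite last_map].
Qed.

Lemma acyclic_ancestors_lt (T : finType) (E : rel T) :
  (forall v p, path E v p -> last v p = v -> p = [::]) ->
  forall a b, connect E a b -> a != b ->
  #|[pred u | connect E u a]| < #|[pred u | connect E u b]|.
Proof.
move=> acyclic a b conn_ab neq_ab; apply/proper_card/properP; split.
  by apply/subsetP => u conn_ua; apply: connect_trans conn_ua conn_ab.
exists b; rewrite !inE ?connect0 //; apply/negP => conn_ba.
move: conn_ab conn_ba => /connectP [p p_ab def_b] /connectP [q q_ba def_a].
have : p ++ q = [::].
  by apply: (acyclic a); [rewrite cat_path p_ab -def_b | rewrite last_cat -def_b].
by case: p {p_ab} def_b => [/= def_b _ | //]; rewrite def_b eqxx in neq_ab.
Qed.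

Lemma acyclic_linear_extension (T : finType) (E : rel T) :
  (forall v p, path E v p -> last v p = v -> p = [::]) ->
  exists m : T -> nat,
    injective m /\ forall a b, connect E a b -> a != b -> m a < m b.
Proof.
move=> acyclic; pose h a := #|[pred u | connect E u a]|.
pose N := #|T|; have N_gt0 (a : T) : 0 < N by apply/card_gt0P; exists a.
exists (fun a => h a * N + enum_rank a); split.
  move=> a b eq_ab.
  have eq_h : h a = h b.
    move: (f_equal (divn^~ N) eq_ab).
    by rewrite !(divnMDl _ _ (N_gt0 a)) !divn_small ?addn0 ?ltn_ord.
  by move: eq_ab; rewrite eq_h => /addnI /val_inj /enum_rank_inj.
move=> a b conn_ab neq_ab; have := acyclic_ancestors_lt acyclic conn_ab neq_ab.
rewrite -/(h a) -/(h b) => lt_h.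
have := ltn_ord (enum_rank a); rewrite -/N => lt_rank.
have : (h a).+1 * N <= h b * N by rewrite leq_mul2r lt_h orbT.
lia.
Qed.

Section SortByKey.

Variables (T : finType) (key : T -> nat).
Hypothesis key_inj : injective key.

Definition sort_by_key : seq T := sort (relpre key leq) (enum T).

Lemma sort_by_key_uniq : uniq sort_by_key.
Proof. by rewrite sort_uniq enum_uniq. Qed.

Lemma mem_sort_by_key x : x \in sort_by_key.
Proof. by rewrite mem_sort mem_enum. Qed.

Lemma index_sort_by_key_lt x y :
  (index x sort_by_key < index y sort_by_key) = (key x < key y).
Proof.
have sorted_key : sorted (relpre key leq) sort_by_key.
  by apply: sort_sorted => u v; apply: leq_total.
have key_lt u v : index u sort_by_key < index v sort_by_key -> key u < key v.
  move=> lt_uv; rewrite ltn_neqAle (inj_eq key_inj).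
  have key_tr : transitive (relpre key leq) by move=> ? ? ?; apply: leq_trans.
  have -> : key u <= key v by apply: (sorted_ltn_index key_tr sorted_key); rewrite ?mem_sort_by_key.
  rewrite andbT.
  by apply: contraTneq lt_uv => ->; rewrite ltnn.
case: ltngtP => [/key_lt -> // | /key_lt lt_yx | ].
  by apply/esym/negbTE; rewrite -leqNgt ltnW.
by move/(index_inj x (mem_sort_by_key x) (mem_sort_by_key y)) => ->; rewrite ltnn.
Qed.

Lemma index_sort_by_key_succ x y : key y = (key x).+1 ->
  index y sort_by_key = (index x sort_by_key).+1.
Proof.
move=> key_y; have lt_xy : index x sort_by_key < index y sort_by_key.
  by rewrite index_sort_by_key_lt key_y.
apply/eqP; rewrite eqn_leq lt_xy andbT leqNgt; apply/negP => lt_succ.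
pose z := nth x sort_by_key (index x sort_by_key).+1.
have idx_z : index z sort_by_key = (index x sort_by_key).+1.
  by rewrite index_uniq ?sort_by_key_uniq // (leq_trans lt_succ) ?index_size.
have := index_sort_by_key_lt x z; rewrite idx_z ltnSn => /esym lt_xz.
have := index_sort_by_key_lt z y; rewrite idx_z lt_succ key_y => /esym.
by rewrite ltnS leqNgt lt_xz.
Qed.

End SortByKey.

Section RfPairs.

Variables (T : finType) (isSnd : T -> bool) (rf : rel T).
Hypothesis snd_matched : forall s, isSnd s -> exists! r, ~~ isSnd r /\ rf s r.
Hypothesis rcv_matched : forall r, ~~ isSnd r -> exists! s, isSnd s /\ rf s r.

Definition partner (e : T) : T :=
  odflt e [pick f | if isSnd e then ~~ isSnd f && rf e f else isSnd f && rf f e].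

Definition rf_pair (e : T) : T * T :=
  if isSnd e then (e, partner e) else (partner e, e).

Lemma partnerP e :
  if isSnd e then ~~ isSnd (partner e) && rf e (partner e)
  else isSnd (partner e) && rf (partner e) e.
Proof.
rewrite /partner; case: pickP => [f -> // | no_partner] /=.
case: (boolP (isSnd e)) => [snd_e | rcv_e] in no_partner *.
  have [r [[rcv_r rf_er] _]] := snd_matched snd_e.
  by have := no_partner r; rewrite rcv_r rf_er.
have [s [[snd_s rf_se] _]] := rcv_matched rcv_e.
by have := no_partner s; rewrite snd_s rf_se.
Qed.

Lemma rf_rf_pair e : rf (rf_pair e).1 (rf_pair e).2.
Proof. by have := partnerP e; rewrite /rf_pair; case: (isSnd e) => /andP []. Qed.

Lemma mem_rf_pair e : (e == (rf_pair e).1) || (e == (rf_pair e).2).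
Proof. by rewrite /rf_pair; case: (isSnd e); rewrite eqxx ?orbT. Qed.

Lemma rf_pairE s r : isSnd s -> ~~ isSnd r -> rf s r ->
  rf_pair s = (s, r) /\ rf_pair r = (s, r).
Proof.
move=> snd_s rcv_r rf_sr; have := partnerP s; have := partnerP r.
rewrite /rf_pair snd_s (negbTE rcv_r) => /andP [snd_ps rf_ps] /andP [rcv_pr rf_pr].
have [r0 [_ uniq_r]] := snd_matched snd_s; have [s0 [_ uniq_s]] := rcv_matched rcv_r.
by rewrite -(uniq_r _ (conj rcv_pr rf_pr)) (uniq_r _ (conj rcv_r rf_sr))
           -(uniq_s _ (conj snd_ps rf_ps)) (uniq_s _ (conj snd_s rf_sr)).
Qed.

Lemma rf_pair_inj e f : rf_pair e = rf_pair f -> isSnd e = isSnd f -> e = f.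
Proof. by rewrite /rf_pair => + eq_snd; rewrite eq_snd; case: (isSnd f) => -[]. Qed.

Lemma rf_pair_eq e f : rf_pair e = rf_pair f -> [\/ e = f, rf e f | rf f e].
Proof.
move=> eq_ef; have [eq_snd | neq_snd] := eqVneq (isSnd e) (isSnd f).
  by constructor 1; apply: rf_pair_inj.
have := rf_rf_pair e; move: eq_ef neq_snd; rewrite /rf_pair.
case: (isSnd e); case: (isSnd f) => // -[].
  by move=> _ -> rf_ef; constructor 2.
by move=> -> _ rf_fe; constructor 3.
Qed.

Lemma po_connect_gsync (po : rel T) : irreflexive po -> transitive po ->
  forall e f, po e f -> connect (gsync_edge po rf) (rf_pair e) (rf_pair f).
Proof.
move=> po_irr po_tr e f /(connect_ipo po_irr po_tr); apply: connect_homo => {}e {}f ipo_ef.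
rewrite /gsync_edge !rf_rf_pair; apply/existsP; exists e; apply/existsP; exists f.
by rewrite !mem_rf_pair.
Qed.

End RfPairs.

Lemma acyclic_sync_schedule (T : finType) (Th C : eqType)
    (thr : T -> Th) (isSnd : T -> bool) (ch : T -> C) (po rf : rel T) :
  abstract_execution thr po ->
  rf_wt isSnd ch rf ->
  (forall s, isSnd s -> exists! r, ~~ isSnd r /\ rf s r) ->
  (forall r, ~~ isSnd r -> exists! s, isSnd s /\ rf s r) ->
  (forall s r, rf s r -> thr s <> thr r) ->
  gsync_acyclic po rf ->
  exists key : T -> nat, [/\ injective key,
    forall e f, po e f -> key e < key f & forall s r, rf s r -> key r = (key s).+1].
Proof.
move=> [po_irr' po_tr' _ po_thr] rf_ok snd_matched rcv_matched rf_thr acyclic.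
have po_irr : irreflexive po by move=> e; apply/negbTE.
have po_tr : transitive po by move=> f e g; apply: po_tr'.
have [m [m_inj m_lt]] := acyclic_linear_extension (E := gsync_edge po rf) acyclic.
exists (fun e => 2 * m (rf_pair isSnd rf e) + ~~ isSnd e); split.
- move=> e f /= eq_key.
  have eq_snd : isSnd e = isSnd f.
    by move: eq_key; case: (isSnd e); case: (isSnd f) => //=; lia.
  apply: (@rf_pair_inj _ isSnd rf _ _ _ eq_snd); apply: m_inj.
  by move: eq_key; rewrite eq_snd; lia.
- move=> e f po_ef /=.
  suff : m (rf_pair isSnd rf e) < m (rf_pair isSnd rf f).
    by case: (isSnd e); case: (isSnd f) => /=; lia.
  apply: m_lt; first exact: (po_connect_gsync snd_matched rcv_matched po_irr po_tr).
  apply/eqP => /(rf_pair_eq snd_matched rcv_matched) [eq_ef | rf_ef | rf_fe].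
  + by move: po_ef; rewrite eq_ef po_irr.
  + exact: rf_thr rf_ef (po_thr _ _ po_ef).
  + exact: rf_thr rf_fe (esym (po_thr _ _ po_ef)).
move=> s r rf_sr; have [snd_s rcv_r _] := rf_ok _ _ rf_sr.
have [-> ->] := rf_pairE snd_matched rcv_matched snd_s rcv_r rf_sr.
by rewrite snd_s (negbTE rcv_r) addn0 addn1.
Qed.

Section Schedule.

Variables (T : finType) (Th C : eqType) (thr : T -> Th) (isSnd : T -> bool) (ch : T -> C).
Variables (po : rel T) (cap : C -> nat) (rf : rel T) (key : T -> nat).
Hypothesis po_ok : abstract_execution thr po.
Hypothesis rf_ok : rf_wt isSnd ch rf.
Hypothesis cap0 : forall e, cap (ch e) = 0.
Hypothesis snd_matched : forall s, isSnd s -> exists r, rf s r.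
Hypothesis rcv_matched : forall r, ~~ isSnd r -> exists s, rf s r.
Hypothesis rf_thr : forall s r, rf s r -> thr s <> thr r.
Hypothesis key_inj : injective key.
Hypothesis po_key : forall e f, po e f -> key e < key f.
Hypothesis rf_key : forall s r, rf s r -> key r = (key s).+1.

Local Notation sigma := (sort_by_key key).

Lemma rf_index_schedule s r : rf s r -> index r sigma = (index s sigma).+1.
Proof. by move=> /rf_key; apply: index_sort_by_key_succ. Qed.

Lemma po_of_schedule e f : po_of thr sigma e f = po e f.
Proof.
have [_ _ po_total po_thr] := po_ok.
rewrite /po_of !mem_sort_by_key index_sort_by_key_lt //=; apply/andP/idP.
  case=> lt_ef /eqP thr_ef.
  have neq_ef : e != f by apply: contraTneq lt_ef => ->; rewrite ltnn.
  case/orP: (po_total _ _ thr_ef neq_ef) => // /po_key lt_fe.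
  by have := ltn_trans lt_ef lt_fe; rewrite ltnn.
by move=> po_ef; rewrite po_key // (po_thr _ _ po_ef).
Qed.

Lemma well_formed_schedule : well_formed thr isSnd ch cap sigma.
Proof.
split.
  move=> c cap_c n.
  have no_c x : (ch x == c) = false by apply: contraTF cap_c => /eqP <-; rewrite cap0.
  by rewrite /nS /nR !(eq_count (a2 := pred0)) ?count_pred0 // => x; rewrite no_c andbF.
move=> x _ _; case: ifP => [/snd_matched [y rf_xy] | /negbT /rcv_matched [y rf_yx]].
  have [_ rcv_y ch_xy] := rf_ok rf_xy.
  exists y; split; rewrite ?mem_sort_by_key ?(rf_index_schedule rf_xy) //.
  by apply/eqP => thr_yx; apply: rf_thr rf_xy (esym thr_yx).
have [snd_y _ ch_yx] := rf_ok rf_yx.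
exists y; split; rewrite ?mem_sort_by_key ?(rf_index_schedule rf_yx) //.
by apply/eqP; apply: rf_thr rf_yx.
Qed.

Lemma rf_of_schedule s r : rf_of isSnd ch sigma s r = rf s r.
Proof.
rewrite rf_of_sync ?sort_by_key_uniq ?mem_sort_by_key //=.
- apply/andP/idP => [[snd_s /eqP idx_r] | rf_sr].
    have [r' rf_sr'] := snd_matched snd_s.
    suff -> : r = r' by [].
    apply: (index_inj s (mem_sort_by_key key r) (mem_sort_by_key key r')).
    by rewrite idx_r (rf_index_schedule rf_sr').
  by have [snd_s _ _] := rf_ok rf_sr; rewrite snd_s (rf_index_schedule rf_sr) eqxx.
- move=> x _ /snd_matched [y rf_xy]; have [_ rcv_y ch_xy] := rf_ok rf_xy.
  by exists y; [exact: mem_sort_by_key | split; rewrite ?(rf_index_schedule rf_xy)].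
move=> x _ /rcv_matched [y rf_yx]; have [snd_y _ _] := rf_ok rf_yx.
by exists y; [exact: mem_sort_by_key | rewrite (rf_index_schedule rf_yx)].
Qed.

Lemma schedule_consistent : consistent thr isSnd ch po cap rf.
Proof.
exists sigma; split; [exact: sort_by_key_uniq | exact: mem_sort_by_key | | |].
- exact: po_of_schedule.
- exact: well_formed_schedule.
- exact: rf_of_schedule.
Qed.

End Schedule.

Theorem mainTheorem10 (T : finType) (Th C : eqType)
    (thr : T -> Th) (isSnd : T -> bool) (ch : T -> C)
    (po : rel T) (cap : C -> nat) (rf : rel T) :
  abstract_execution thr po ->
  rf_wt isSnd ch rf ->
  (forall e : T, cap (ch e) = 0) ->
  (forall s : T, isSnd s -> exists! r : T, ~~ isSnd r /\ rf s r) ->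
  (forall r : T, ~~ isSnd r -> exists! s : T, isSnd s /\ rf s r) ->
  (forall s r : T, rf s r -> thr s <> thr r) ->
  (consistent thr isSnd ch po cap rf <-> gsync_acyclic po rf).
Proof.
move=> po_ok rf_ok cap0 snd_matched rcv_matched rf_thr; split.
  exact: consistent_gsync_acyclic.
move=> /(acyclic_sync_schedule po_ok rf_ok snd_matched rcv_matched rf_thr).
case=> key [key_inj po_key rf_key].
apply: (schedule_consistent (key := key)) => // [s /snd_matched | r /rcv_matched].
  by case=> r [[_ rf_sr] _]; exists r.
by case=> s [[_ rf_sr] _]; exists s.
Qed.
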